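(* Let $N\ge1$, $Y\ge0$ integers, $K=N+Y-1$, and let $M$ be an integer with $\alpha:=M-K-1>-1$. Let $w(t)=t^\alpha e^{-t}$ on $(0,\infty)$, $\langle p,q\rangle=\int_0^\infty p(t)q(t)w(t)\,dt$, and let $C_{N-1}(t)$ be the monic Laguerre polynomial of degree $N-1$, $C_{N-1}=(-1)^{N-1}(N-1)!\,L^{(\alpha)}_{N-1}$. Define $$D_{N-1}(t)=\Gamma(M)\sum_{j=N-1}^{K}\frac{(-K)_j}{\Gamma(M-K+j)}L^{(\alpha)}_j(t).$$ Then $D_{N-1}$ is a monic polynomial of the form $t^K+\sum_{l=0}^{N-2}a_l t^l$ (i.e. a linear combination of $1,t,\dots,t^{N-2},t^K$ with coefficient $1$ on $t^K$), satisfies $\langle t^l,D_{N-1}\rangle=0$ for $l=0,\dots,N-2$, and $$\langle C_{N-1},D_{N-1}\rangle=(-1)^{N-1}\Gamma(M)\,(-K)_{N-1}.$$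
   Context: $L^{(\alpha)}_j(t)=\sum_{l=0}^j\frac{(-1)^l\Gamma(j+\alpha+1)}{\Gamma(j-l+1)\Gamma(\alpha+l+1)}\frac{t^l}{l!}$ is the generalized Laguerre polynomial; $(a)_j=a(a+1)\cdots(a+j-1)$, $(a)_0=1$. *)

From mathcomp Require Import all_boot all_order all_algebra.
From mathcomp Require Import all_classical all_reals all_analysis.
Set Implicit Arguments. Unset Strict Implicit. Unset Printing Implicit Defensive.
Import Order.TTheory GRing.Theory Num.Theory.
Local Open Scope ring_scope.
Local Open Scope classical_set_scope.

(* Gamma function at positive integers: Gamma z = (z-1)!  for z >= 1.
   Only used at arguments that are positive integers. *)
Definition GammaZ (R : realType) (z : int) : R := ((`|z|%N).-1)`!%:R.

Definition poch (R : realType) (a : R) (j : nat) : R :=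
  \prod_(i < j) (a + i%:R).

Definition laguerre (R : realType) (alpha : int) (j : nat) : {poly R} :=
  \sum_(l < j.+1)
     ((-1) ^+ l * GammaZ R (j%:Z + alpha + 1)
        / (GammaZ R (j%:Z - l%:Z + 1) * GammaZ R (alpha + l%:Z + 1))
        / (l`!)%:R) *: 'X^l.

Definition lag_inner (R : realType) (alpha : int) (p q : {poly R}) : \bar R :=
  (\int[@lebesgue_measure R]_(t in `]0%R, +oo[)
      (p.[t] * q.[t] * (t ^ alpha) * expR (- t))%:E)%E.

(* For a natural exponent a, <p, q> = G(p q t^a), where G is the linear form
   r |-> \int_0^oo r(t) e^{-t} dt = \sum_i r_i i!.  Expanding L^(a)_j gives
   <t^m, L^(a)_j> = (m+a)! \sum_l (-1)^l C(j+a, j-l) C(m+a+l, l), a Chu-Vandermonde sum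
   which vanishes for m < j and equals (-1)^j for m = j.  This yields the orthogonality of D
   to t^l for l < N-1, and reduces <C, D> to the pairing of t^(N-1) with the lowest Laguerre
   term of D.  That D = t^K + (terms of degree < N-1) is a coefficient computation: once
   the Pochhammer symbols and factorials cancel, the coefficient of t^i for N-1 <= i <= K is
   proportional to \sum_t (-1)^t C(K-i, t) = [i = K]. *)
From mathcomp Require Import all_boot all_order all_algebra.
From mathcomp Require Import all_classical all_reals all_analysis.
From mathcomp Require Import measurable_realfun.
From mathcomp Require Import ring zify.
Import Order.TTheory GRing.Theory Num.Theory.
Local Open Scope ring_scope.

Section IntegralPolyExpN.
Import numFieldNormedType.Exports.
Local Open Scope classical_set_scope.
Variable R : realType.
Local Notation mu := (@lebesgue_measure R).

Lemma horner_mulr_expRN (p : {poly R}) (x : R) :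
  p.[x] * expR (- x) = \sum_(i < size p) p`_i * (x ^+ i * expR (- x)).
Proof.
by rewrite horner_coef big_distrl; apply: eq_bigr => i _; rewrite mulrA.
Qed.

Lemma cvg_invr_pinfty : (x^-1 : R) @[x --> +oo%R] --> 0%R.
Proof.
apply/(@gtr0_cvgV0 _ _ _ _ (fun x : R => x)); first by near=> x.
by apply/cvgryPge => A; apply: nbhs_pinfty_ge; exact: num_real.
Unshelve. all: by end_near. Qed.

(* [expR x >= x^(n+1) / (n+1)!] squeezes [x^n e^{-x}] below [(n+1)! / x]. *)
Lemma cvg_exprn_expRN n : (x ^+ n * expR (- x) : R) @[x --> +oo%R] --> 0%R.
Proof.
apply: (@squeeze_cvgr _ _ _ _ (fun _ => 0) (fun x : R => n.+1`!%:R * x^-1)).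
- near=> x.
  have x_gt0 : 0 < x by near: x; apply: nbhs_pinfty_gt; exact: num_real.
  rewrite mulr_ge0 ?exprn_ge0 ?expR_ge0 ?ltW //=.
  have fact_pos : 0 < n.+1`!%:R :> R by rewrite ltr0n fact_gt0.
  have xn_lt : x ^+ n.+1 < n.+1`!%:R * expR x.
    rewrite -ltr_pdivrMl // mulrC.
    by apply: lt_le_trans (expR_ge1Dxn n (ltW x_gt0)); rewrite ltrDr.
  rewrite expRN -(ltr_pM2r (expR_gt0 x)) -(ltr_pM2r x_gt0).
  rewrite divfK ?gt_eqF ?expR_gt0 // -exprSr.
  by rewrite mulrAC divfK ?gt_eqF // mulrC.
- exact: cvg_cst.
- by rewrite -(mulr0 n.+1`!%:R); apply: cvgMl_tmp; exact: cvg_invr_pinfty.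
Unshelve. all: by end_near. Qed.

Lemma cvg_horner_expRN (p : {poly R}) :
  (p.[x] * expR (- x) : R) @[x --> +oo%R] --> 0%R.
Proof.
under eq_cvg do rewrite horner_mulr_expRN.
suff : (\sum_(i < size p) p`_i * (x ^+ i * expR (- x))) @[x --> +oo%R]
    --> \sum_(i < size p) (0 : R) by rewrite big1_eq.
apply: cvg_big => [|i _]; first exact: add_continuous.
by have := cvgMl_tmp (a := p`_i) (cvg_exprn_expRN i); rewrite mulr0 => /(_ _); apply.
Qed.

Lemma is_derive_horner_expRN (q : {poly R}) (x : R) :
  is_derive x 1 (fun y => q.[y] * expR (- y)) ((q^`() - q).[x] * expR (- x)).
Proof.
have -> : (fun y => q.[y] * expR (- y)) = (horner q * (expR \o -%R))%R by [].
have dexpN : is_derive x 1 (expR \o -%R) (expR (- x) * -1).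
  exact: is_derive1_comp.
apply: is_derive_eq.
by rewrite /GRing.scale /= hornerD hornerN mulrN1 mulrN mulrDl mulNr addrC mulrC.
Qed.

Lemma continuous_horner_expRN (q : {poly R}) :
  continuous (fun y => q.[y] * expR (- y)).
Proof.
move=> x; apply/differentiable_continuous/derivable1_diffP.
by case: (is_derive_horner_expRN q x).
Qed.

Lemma measurable_horner_expRN (q : {poly R}) (D : set R) :
  measurable_fun D (fun x : R => (q.[x] * expR (- x))%:E).
Proof.
apply/measurable_EFinP/measurable_funTS.
exact: (continuous_measurable_fun (continuous_horner_expRN q)).
Qed.

Lemma measurable_exprn_expRN k (D : set R) :
  measurable_fun D (fun x : R => (x ^+ k * expR (- x))%:E).
Proof. by under eq_fun do rewrite -hornerXn; exact: measurable_horner_expRN. Qed.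

(* [(expN_primitive k) e^{-x}] is minus a primitive of [x^k e^{-x}]. *)
Fixpoint expN_primitive (k : nat) : {poly R} :=
  if k is k'.+1 then 'X^k + k%:R *: expN_primitive k' else 1.

Lemma expN_primitive_deriv k : expN_primitive k - (expN_primitive k)^`() = 'X^k.
Proof.
elim: k => [|k IH] /=; first by rewrite derivC subr0.
rewrite derivD derivZ derivXn /= opprD addrACA -scalerBr IH.
by rewrite scaler_nat addrNK.
Qed.

Lemma expN_primitive0 k : (expN_primitive k).[0] = k`!%:R.
Proof.
elim: k => [|k IH] /=; first by rewrite hornerC.
by rewrite hornerD hornerZ IH hornerXn expr0n /= add0r factS natrM.
Qed.

Lemma integral_exprn_expRN k :
  (\int[mu]_(x in `]0%R, +oo[) (x ^+ k * expR (- x))%:E = (k`!%:R)%:E)%E.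
Proof.
have monoE : (fun x : R => x ^+ k * expR (- x)) = (fun x => ('X^k).[x] * expR (- x)).
  by apply/funext => x; rewrite hornerXn.
pose F x := - ((expN_primitive k).[x] * expR (- x)).
have dF (x : R) : is_derive x (1 : R) F (x ^+ k * expR (- x)).
  apply: is_derive_eq.
  by rewrite -hornerXn -expN_primitive_deriv /GRing.scale /= hornerD hornerN; ring.
rewrite integral_itv_obnd_cbnd; last exact: measurable_exprn_expRN.
rewrite (@ge0_continuous_FTC2y _ _ F 0 0).
- by rewrite /F expN_primitive0 oppr0 expR0 mulr1 EFinN sub0e oppeK.
- by move=> x x_ge0; rewrite mulr_ge0 ?exprn_ge0 ?expR_ge0.
- by apply: continuous_subspaceT; rewrite monoE; exact: continuous_horner_expRN.
- by rewrite -oppr0; apply: cvgN; exact: cvg_horner_expRN.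
- by move=> x _; case: (dF x).
- by apply: cvg_at_right_filter; apply: cvgN; exact: continuous_horner_expRN.
- by move=> x _; rewrite derive1E derive_val.
Qed.

Lemma integrable_exprn_expRN k :
  mu.-integrable `]0%R, +oo[ (fun x => (x ^+ k * expR (- x))%:E).
Proof.
apply/integrableP; split; first exact: measurable_exprn_expRN.
under eq_integral => x.
  rewrite inE /= in_itv /= andbT => x_gt0.
  rewrite ger0_norm ?mulr_ge0 ?exprn_ge0 ?expR_ge0 ?ltW //.
  over.
by rewrite integral_exprn_expRN ltry.
Qed.

Lemma integral_horner_expRN (r : {poly R}) :
  (\int[mu]_(x in `]0%R, +oo[) (r.[x] * expR (- x))%:E
     = (\sum_(i < size r) r`_i * i`!%:R)%:E)%E.
Proof.
under eq_integral do rewrite horner_mulr_expRN -sumEFin.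
under eq_integral do under eq_bigr do rewrite EFinM.
rewrite integral_sum //; last by move=> i; apply/integrableZl/integrable_exprn_expRN.
rewrite -sumEFin; apply: eq_bigr => i _.
by rewrite integralZl ?integrable_exprn_expRN // integral_exprn_expRN -EFinM.
Qed.

End IntegralPolyExpN.

Section GammaForm.
Variable R : nzRingType.

(* [gamma_form r] is [\int_0^oo r(t) e^{-t} dt]; see [integral_horner_expRN]. *)
Definition gamma_form (r : {poly R}) : R := \sum_(0 <= i < size r) r`_i * i`!%:R.

Lemma gamma_form_wide (r : {poly R}) n :
  (size r <= n)%N -> gamma_form r = \sum_(0 <= i < n) r`_i * i`!%:R.
Proof.
move=> le_r_n; rewrite /gamma_form (big_cat_nat (leq0n _) le_r_n) /=.
rewrite [X in _ + X]big1_seq ?addr0 // => i /andP[_].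
by rewrite mem_index_iota => /andP[le_r_i _]; rewrite nth_default // mul0r.
Qed.

Lemma gamma_formD (p q : {poly R}) : gamma_form (p + q) = gamma_form p + gamma_form q.
Proof.
pose n := maxn (size p) (size q).
rewrite !(gamma_form_wide _ n) ?leq_maxl ?leq_maxr ?size_polyD // -big_split /=.
by apply: eq_bigr => i _; rewrite coefD mulrDl.
Qed.

Lemma gamma_formZ (c : R) (p : {poly R}) : gamma_form (c *: p) = c * gamma_form p.
Proof.
rewrite (gamma_form_wide _ _ (size_scale_leq c p)) big_distrr /=.
by apply: eq_bigr => i _; rewrite coefZ mulrA.
Qed.

Lemma gamma_form0 : gamma_form 0 = 0.
Proof. by rewrite /gamma_form size_poly0 big_geq. Qed.

Lemma gamma_form_sum (I : Type) (s : seq I) (P : pred I) (F : I -> {poly R}) :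
  gamma_form (\sum_(i <- s | P i) F i) = \sum_(i <- s | P i) gamma_form (F i).
Proof. exact: (big_morph _ gamma_formD gamma_form0). Qed.

Lemma gamma_formXn n : gamma_form 'X^n = n`!%:R.
Proof.
rewrite /gamma_form size_polyXn big_nat_recr //= coefXn eqxx mul1r big1_seq ?add0r //.
move=> i /andP[_]; rewrite mem_index_iota => /andP[_ lt_i_n].
by rewrite coefXn (ltn_eqF lt_i_n) mul0r.
Qed.

End GammaForm.
Arguments gamma_form {R} r.

Lemma lag_inner_natE (R : realType) (a : nat) (p q : {poly R}) :
  lag_inner a%:Z p q = (gamma_form (p * q * 'X^a))%:E.
Proof.
rewrite /lag_inner /gamma_form big_mkord -integral_horner_expRN.
by apply: eq_integral => t _; rewrite !hornerM hornerXn -exprnP.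
Qed.

Section AltBinomConv.
Variable R : comNzRingType.

Definition alt_binom_conv (j p q : nat) : R :=
  \sum_(l < j.+1) (-1) ^+ l * 'C(p, j - l)%:R * 'C(q + l, l)%:R.

Lemma alt_binom_conv0 p q : alt_binom_conv 0 p q = 1.
Proof. by rewrite /alt_binom_conv big_ord1 /= !bin0 expr0 !mul1r. Qed.

Lemma alt_binom_conv_p0 j q : alt_binom_conv j 0 q = (-1) ^+ j * 'C(q + j, j)%:R.
Proof.
rewrite /alt_binom_conv big_ord_recr /= subnn bin0 mulr1 big1 ?add0r // => i _ /=.
by rewrite bin0n subn_eq0 leqNgt ltn_ord mulr0 mul0r.
Qed.

Lemma alt_binom_convSS j p q :
  alt_binom_conv j.+1 p.+1 q = alt_binom_conv j.+1 p q + alt_binom_conv j p q.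
Proof.
rewrite /alt_binom_conv big_ord_recr [in X in _ = X + _]big_ord_recr /= subnn !bin0.
rewrite addrAC; congr (_ + _); rewrite -big_split /=.
apply: eq_bigr => i _; rewrite subSn; last by rewrite -ltnS ltn_ord.
by rewrite binS natrD mulrDr mulrDl.
Qed.

(* [\sum_l C(p, j-l) C(-q-1, l) = C(p-q-1, j)] (Chu-Vandermonde), in its two regimes. *)
Lemma alt_binom_conv_le p q j :
  (p <= q)%N -> alt_binom_conv j p q = (-1) ^+ j * 'C(q - p + j, j)%:R.
Proof.
elim: p q j => [|p IH] q j le_pq; first by rewrite alt_binom_conv_p0 subn0.
case: j => [|j]; first by rewrite alt_binom_conv0 expr0 bin0 mul1r.
rewrite alt_binom_convSS !IH; try exact: ltnW.
rewrite (_ : q - p = (q - p.+1).+1)%N; last by lia.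
by rewrite addSn !addnS binS natrD exprS addSn; ring.
Qed.

Lemma alt_binom_conv_gt q e j : alt_binom_conv j (q + e)%N.+1 q = 'C(e, j)%:R.
Proof.
elim: e j => [|e IH] j; case: j => [|j]; rewrite ?alt_binom_conv0 ?bin0 //.
  rewrite addn0 alt_binom_convSS !alt_binom_conv_le // subnn !add0n !binn.
  by rewrite exprS bin0n /=; ring.
by rewrite addnS alt_binom_convSS !IH binS natrD.
Qed.

Lemma sum_alt_binom n : \sum_(t < n.+1) (-1) ^+ t * 'C(n, t)%:R = (n == 0)%N%:R :> R.
Proof.
have := exprDn (1 : R) (-1) n; rewrite subrr expr0n => ->.
by apply: eq_bigr => t _; rewrite expr1n mul1r mulr_natr.
Qed.

End AltBinomConv.

Section LaguerreMoments.
Variable R : realType.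

Lemma natr_fact_neq0 n : (n`!%:R : R) != 0.
Proof. by rewrite pnatr_eq0 -lt0n fact_gt0. Qed.

Definition lag_coef (a j l : nat) : R :=
  (-1) ^+ l * (j + a)`!%:R / ((j - l)`!%:R * (a + l)`!%:R) / l`!%:R.

Lemma laguerre_natE (a j : nat) : laguerre R a%:Z j = \poly_(l < j.+1) lag_coef a j l.
Proof.
rewrite poly_def /laguerre; apply: eq_bigr => [[l lt_l_j]] _ /=; congr (_ *: _).
have E1 : j%:Z + a%:Z + 1 = (j + a).+1 by rewrite -addn1 !PoszD.
have E2 : j%:Z - l%:Z + 1 = (j - l).+1 by rewrite subzn // -addn1 PoszD.
have E3 : a%:Z + l%:Z + 1 = (a + l).+1 by rewrite -addn1 !PoszD.
by rewrite E1 E2 E3.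
Qed.

Lemma size_laguerre_nat a j : (size (laguerre R a%:Z j) <= j.+1)%N.
Proof. by rewrite laguerre_natE size_poly. Qed.

Lemma lag_coef_diag a j : lag_coef a j j = (-1) ^+ j / j`!%:R.
Proof.
rewrite /lag_coef subnn fact0 mul1r addnC.
by have := natr_fact_neq0 (a + j); move=> ?; field; apply/andP.
Qed.

Lemma coef_laguerre_nat_diag a n : (laguerre R a%:Z n)`_n = (-1) ^+ n / n`!%:R.
Proof. by rewrite laguerre_natE coef_poly ltnSn lag_coef_diag. Qed.

Lemma lag_coef_fact a j l m : (l <= j)%N ->
  lag_coef a j l * (m + a + l)`!%:R
  = (-1) ^+ l * 'C(j + a, j - l)%:R * 'C(m + a + l, l)%:R * (m + a)`!%:R.
Proof.
move=> le_l_j.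
have := bin_fact (leq_trans (leq_subr l j) (leq_addr a j)).
rewrite (_ : j + a - (j - l) = a + l)%N; last by lia.
have := bin_fact (leq_addl (m + a) l); rewrite addnK.
move=> fact_mal fact_ja; rewrite /lag_coef -fact_ja -fact_mal !natrM.
have := natr_fact_neq0 (j - l); have := natr_fact_neq0 (a + l).
have := natr_fact_neq0 l; have := natr_fact_neq0 (m + a).
by move=> ? ? ? ?; field; apply/and3P.
Qed.

Lemma gamma_form_Xn_laguerre a m j :
  gamma_form ('X^(m + a) * laguerre R a%:Z j)
  = (m + a)`!%:R * alt_binom_conv R j (j + a) (m + a).
Proof.
rewrite laguerre_natE poly_def big_distrr gamma_form_sum /alt_binom_conv big_distrr.
apply: eq_bigr => l _ /=.
rewrite -scalerAr -exprD gamma_formZ gamma_formXn lag_coef_fact ?leq_ord //.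
by rewrite mulrC.
Qed.

Lemma gamma_form_Xn_laguerre_lt a m j : (m < j)%N ->
  gamma_form ('X^(m + a) * laguerre R a%:Z j) = 0.
Proof.
move=> lt_m_j; rewrite gamma_form_Xn_laguerre.
rewrite (_ : j + a = (m + a + (j - m - 1)).+1)%N; last by lia.
by rewrite alt_binom_conv_gt bin_small ?mulr0 //; lia.
Qed.

Lemma gamma_form_Xn_laguerre_diag a j :
  gamma_form ('X^(j + a) * laguerre R a%:Z j) = (-1) ^+ j * (j + a)`!%:R.
Proof.
by rewrite gamma_form_Xn_laguerre alt_binom_conv_le // subnn add0n binn mulr1 mulrC.
Qed.

End LaguerreMoments.

Section BiorthogonalPolynomial.
Variables (R : realType) (a K : nat).

Lemma poch_oppn_fact n : (n <= K)%N ->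
  poch (- K%:R) n * (K - n)`!%:R = (-1) ^+ n * K`!%:R :> R.
Proof.
elim: n => [|n IH] lt_n_K; first by rewrite /poch big_ord0 subn0 expr0 !mul1r.
rewrite /poch big_ord_recr /= -/(poch _ _).
have KnE : (K - n = (K - n.+1).+1)%N by lia.
move: (IH (ltnW lt_n_K)); rewrite KnE factS natrM => IH'.
transitivity (- ((-1) ^+ n * K`!%:R) : R); last by rewrite exprS mulN1r mulNr.
rewrite -IH' (_ : (K - n.+1).+1%:R = K%:R - n%:R :> R); first by ring.
by rewrite -KnE natrB //; exact: ltnW.
Qed.

Lemma lagD_coef_term i t : (t + i <= K)%N ->
  poch (- K%:R) (t + i) / (a + (t + i))`!%:R * lag_coef R a (t + i) i
  = K`!%:R / ((K - i)`!%:R * (a + i)`!%:R * i`!%:R) * ((-1) ^+ t * 'C(K - i, t)%:R).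
Proof.
move=> le_ti_K.
have pochE : poch (- K%:R) (t + i) = (-1) ^+ (t + i) * K`!%:R / (K - (t + i))`!%:R :> R.
  apply: (mulIf (natr_fact_neq0 R (K - (t + i)))).
  by rewrite divfK ?natr_fact_neq0 // poch_oppn_fact.
have binE : (K - i)`! = ('C(K - i, t) * (t`! * (K - (t + i))`!))%N.
  by rewrite addnC subnDA bin_fact //; lia.
rewrite /lag_coef pochE binE (_ : t + i - i = t)%N; last by lia.
(* [field] cannot use [(-1)^i * (-1)^i = 1], so that factor is put on the right too. *)
rewrite !natrM exprD (addnC (t + i) a) addnA -[RHS](signrMK i).
have := natr_fact_neq0 R (K - (t + i)); have := natr_fact_neq0 R (a + t + i).
have := natr_fact_neq0 R (a + i); have := natr_fact_neq0 R i.
have := natr_fact_neq0 R t.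
have : 'C(K - i, t)%:R != 0 :> R by rewrite pnatr_eq0 -lt0n bin_gt0; lia.
by move=> *; field; do ![apply/andP; split] => //.
Qed.

Lemma sum_lagD_coef i : (i <= K)%N ->
  (a + K)`!%:R * \sum_(i <= j < K.+1) poch (- K%:R) j / (a + j)`!%:R * lag_coef R a j i
  = (i == K)%:R :> R.
Proof.
move=> le_i_K.
rewrite -{1}(add0n i) big_addn (_ : K.+1 - i = (K - i).+1)%N; last by lia.
rewrite (eq_big_nat _ _ (F2 := fun t => K`!%:R / ((K - i)`!%:R * (a + i)`!%:R * i`!%:R)
    * ((-1) ^+ t * 'C(K - i, t)%:R))); last first.
  by move=> t /andP[_ lt_t]; apply: lagD_coef_term; lia.
rewrite -big_distrr big_mkord sum_alt_binom /=.
have [->|ne_i_K] := eqVneq i K.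
  rewrite subnn eqxx /= fact0 mul1r mulr1.
  have := natr_fact_neq0 R (a + K); have := natr_fact_neq0 R K.
  by move=> *; field; apply/andP.
by rewrite subn_eq0 leqNgt ltn_neqAle ne_i_K le_i_K !mulr0.
Qed.

(* [lagD n] is the polynomial [D_{N-1}] of the statement, with [n = N - 1] and [alpha = a],
   so that [Gamma(M) = (a + K)!] and [Gamma(M - K + j) = (a + j)!]. *)
Definition lagD (n : nat) : {poly R} :=
  (a + K)`!%:R *:
    \sum_(n <= j < K.+1) (poch (- K%:R) j / (a + j)`!%:R) *: laguerre R a%:Z j.

Lemma coef_lagD n i : (n <= i)%N -> (lagD n)`_i = (i == K)%:R.
Proof.
move=> le_n_i; rewrite coefZ coef_sum.
under eq_bigr do rewrite coefZ laguerre_natE coef_poly ltnS.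
have [le_i_K | lt_K_i] := leqP i K.
  rewrite (big_cat_nat le_n_i (leqW le_i_K)) /= [X in X + _]big1_seq ?add0r; last first.
    move=> j /andP[_]; rewrite mem_index_iota => /andP[_ lt_j_i].
    by rewrite leqNgt lt_j_i mulr0.
  rewrite -(sum_lagD_coef _ le_i_K); congr (_ * _).
  by apply: eq_big_nat => j /andP[le_i_j _]; rewrite le_i_j.
rewrite big1_seq ?mulr0 ?gtn_eqF // => j /andP[_]; rewrite mem_index_iota => /andP[_ lt_j_K].
by rewrite leqNgt (leq_trans lt_j_K lt_K_i) mulr0.
Qed.

Lemma lagD_sparse n : (n <= K)%N -> lagD n = 'X^K + \poly_(l < n) (lagD n)`_l.
Proof.
move=> le_n_K; apply/polyP => i; rewrite coefD coefXn coef_poly.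
have [lt_i_n | le_n_i] := ltnP i n; last by rewrite coef_lagD // addr0.
by rewrite (_ : i == K = false) ?add0r // ltn_eqF // (leq_trans lt_i_n le_n_K).
Qed.

Lemma gamma_form_Xn_lagD n m :
  gamma_form ('X^m * lagD n * 'X^a) = (a + K)`!%:R *
    \sum_(n <= j < K.+1) poch (- K%:R) j / (a + j)`!%:R
      * gamma_form ('X^(m + a) * laguerre R a%:Z j).
Proof.
rewrite /lagD -scalerAr -scalerAl gamma_formZ mulrAC -exprD; congr (_ * _).
rewrite big_distrr gamma_form_sum; apply: eq_bigr => j _ /=.
by rewrite -scalerAr gamma_formZ.
Qed.

Lemma gamma_form_Xn_lagD_lt n m : (m < n)%N -> gamma_form ('X^m * lagD n * 'X^a) = 0.
Proof.
move=> lt_m_n; rewrite gamma_form_Xn_lagD big1_seq ?mulr0 // => j /andP[_].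
rewrite mem_index_iota => /andP[le_n_j _].
by rewrite gamma_form_Xn_laguerre_lt ?mulr0 // (leq_trans lt_m_n le_n_j).
Qed.

Lemma gamma_form_Xn_lagD_diag n : (n <= K)%N ->
  gamma_form ('X^n * lagD n * 'X^a) = (-1) ^+ n * (a + K)`!%:R * poch (- K%:R) n.
Proof.
move=> le_n_K; rewrite gamma_form_Xn_lagD big_ltn ?ltnS //.
rewrite big1_seq ?addr0 => [|j /andP[_]]; last first.
  rewrite mem_index_iota => /andP[lt_n_j _].
  by rewrite gamma_form_Xn_laguerre_lt ?mulr0.
rewrite gamma_form_Xn_laguerre_diag (addnC n a).
by have := natr_fact_neq0 R (a + n); move=> *; field.
Qed.

Lemma gamma_form_lagD n (p : {poly R}) : (n <= K)%N -> (size p <= n.+1)%N ->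
  gamma_form (p * lagD n * 'X^a) = p`_n * ((-1) ^+ n * (a + K)`!%:R * poch (- K%:R) n).
Proof.
move=> le_n_K le_p_n.
have pE : p = \sum_(i < n.+1) p`_i *: 'X^i.
  rewrite -poly_def; apply/polyP => i; rewrite coef_poly.
  by case: ltnP => // le_n_i; rewrite nth_default // (leq_trans le_p_n).
rewrite {1}pE !big_distrl gamma_form_sum big_ord_recr /= big1 ?add0r => [|i _].
  by rewrite -!scalerAl gamma_formZ gamma_form_Xn_lagD_diag.
by rewrite -!scalerAl gamma_formZ gamma_form_Xn_lagD_lt ?mulr0.
Qed.

End BiorthogonalPolynomial.

Theorem mainTheorem6 (R : realType) (N Y : nat) (M : int) :
  (1 <= N)%N ->
  let K := (N + Y - 1)%N in
  let alpha : int := M - K%:Z - 1 in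
  -1 < alpha ->
  let C : {poly R} := ((-1) ^+ (N - 1) * ((N - 1)`!)%:R) *: laguerre R alpha (N - 1) in
  let D : {poly R} := GammaZ R M *:
      \sum_(N - 1 <= j < K.+1)
         (poch (- K%:R) j / GammaZ R (M - K%:Z + j%:Z)) *: laguerre R alpha j in
  (exists a : nat -> R, D = 'X^K + \sum_(l < N - 1) a l *: 'X^l)
  /\ (forall l : nat, (l < N - 1)%N -> lag_inner alpha 'X^l D = 0%E)
  /\ lag_inner alpha C D
       = ((-1) ^+ (N - 1) * GammaZ R M * poch (- K%:R) (N - 1))%:E.
Proof.
move=> _ K alpha alpha_gtN1 C D.
have [a alphaE] : exists a : nat, alpha = a by exists `|alpha|%N; rewrite gez0_abs //; lia.
have ME : M = (a + K).+1 by move: alphaE; rewrite /alpha; lia.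
have DE : D = lagD R a K (N - 1).
  rewrite /D /lagD alphaE ME; congr (_ *: _); apply: eq_bigr => j _.
  by rewrite (_ : (a + K).+1%:Z - K%:Z + j%:Z = (a + j).+1) //; lia.
have le_n_K : (N - 1 <= K)%N by lia.
have size_C : (size C <= (N - 1).+1)%N.
  by rewrite /C alphaE (leq_trans (size_scale_leq _ _)) ?size_laguerre_nat.
have C_n : C`_(N - 1) = 1.
  by rewrite /C alphaE coefZ coef_laguerre_nat_diag mulrAC signrMK mulVf ?natr_fact_neq0.
rewrite DE alphaE; split; [|split].
- by exists (fun l => (lagD R a K (N - 1))`_l); rewrite -poly_def -lagD_sparse.
- by move=> l lt_l; rewrite lag_inner_natE gamma_form_Xn_lagD_lt.
- by rewrite lag_inner_natE gamma_form_lagD // C_n mul1r ME.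
Qed.
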